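(* Let $T$ be a nontrivial tree of order $n(T)$ with $l(T)$ leaves and $s(T)$ support vertices. Then $\gamma^{d}_2(T)\leq \frac{n(T)+3s(T)-l(T)}{4}$.
   Context: A leaf is a vertex of degree $1$; a support vertex is a vertex adjacent to a leaf. For a tree $T$, $n(T)$, $l(T)$, $s(T)$ denote its order, number of leaves and number of support vertices. A set $D\subseteq V(G)$ is a disjunctive dominating set of $G$ if every vertex $v\notin D$ either has a neighbor in $D$ or has at least two vertices of $D$ at distance exactly $2$ from it. $\gamma^{d}_2(G)$ is the minimum size of such a set. *)

From mathcomp Require Import all_boot.
Set Implicit Arguments. Unset Strict Implicit. Unset Printing Implicit Defensive.

Section Graph.
Variables (T : finType) (e : rel T).

Definition simple_graph := symmetric e /\ irreflexive e.

(* number of edges: ordered adjacent pairs counted twice *)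
Definition n_edges := #|[set p : T * T | e p.1 p.2]| %/ 2.

Definition is_tree := simple_graph /\ (forall x y, connect e x y) /\ n_edges = #|T| - 1.

Definition deg (v : T) := #|[set u | e v u]|.
Definition leaves := [set v | deg v == 1].
Definition supports := [set v | [exists u, e v u && (u \in leaves)]].

Definition dist2 (x y : T) := [&& x != y, ~~ e x y & [exists z, e x z && e z y]].

Definition disj_dom (D : {set T}) :=
  [forall v, (v \notin D) ==>
     ([exists u in D, e v u] || (1 < #|[set u in D | dist2 v u]|))].

Definition gamma_d2 := \big[minn/#|T|]_(D : {set T} | disj_dom D) #|D|.
End Graph.

From mathcomp Require Import all_boot all_order zify.
Set Implicit Arguments. Unset Strict Implicit. Unset Printing Implicit Defensive.

(* Root T at a leaf r and, for i < 4, let D_i consist of the support vertices and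
   the non-leaves whose depth is congruent to i modulo 4.  Each D_i is disjunctive
   dominating: a leaf is adjacent to its support vertex, and a non-leaf, non-support
   vertex v lies on a path g - p - v - c - gc of depths k, ..., k + 4 in which p and c
   are not leaves.  Either p or c has depth congruent to i, or both g and gc do; then
   g or gc is a leaf, making p or c a support vertex, or both lie in D_i at distance
   2 from v.  The D_i share the s support vertices and partition the n - l - s other
   non-leaves, so 4 gamma <= 4 s + (n - l - s).  This needs that no leaf is a support
   vertex, which fails only for K_2, where the bound is checked directly. *)

Section Depth.
Variables (T : finType) (e : rel T) (r : T).
Hypothesis connect_root : forall x, connect e r x.

Fixpoint ball k : {set T} :=
  if k is k'.+1 then ball k' :|: [set y | [exists x in ball k', e x y]] else [set r].

Lemma ball_mono k m : k <= m -> ball k \subset ball m.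
Proof.
move=> /subnK <-; elim: (m - k) => [|j IH]; first by rewrite add0n.
by apply: subset_trans IH _; rewrite addSn subsetUl.
Qed.

Lemma ball_step k x y : x \in ball k -> e x y -> y \in ball k.+1.
Proof. by move=> xk xy; rewrite /= !inE; apply/orP; right; apply/existsP; exists x; apply/andP. Qed.

Lemma ball_path p x k : x \in ball k -> path e x p -> last x p \in ball (k + size p).
Proof.
elim: p x k => [|y p IH] x k /=; first by rewrite addn0.
by move=> xk /andP[xy yp]; rewrite addnS -addSn; apply: IH yp; apply: ball_step xy.
Qed.

Lemma exists_ball x : exists k, x \in ball k.
Proof.
have /connectP [p rp ->] := connect_root x.
by exists (0 + size p); apply: ball_path rp; apply: set11.
Qed.

Definition depth x := ex_minn (exists_ball x).

Lemma ballE x k : (x \in ball k) = (depth x <= k).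
Proof.
rewrite /depth; case: ex_minnP => m xm m_min; apply/idP/idP; first exact: m_min.
by move=> mk; apply: subsetP xm; apply: ball_mono.
Qed.

Lemma depth_eq0 x : (depth x == 0) = (x == r).
Proof. by rewrite -leqn0 -ballE inE. Qed.

Lemma depth_edge x y : e x y -> depth y <= (depth x).+1.
Proof. by move=> xy; rewrite -ballE; apply: ball_step xy; rewrite ballE. Qed.

Lemma depth_pred x k : depth x = k.+1 -> exists2 p, e p x & depth p = k.
Proof.
move=> dx; have := leqnn (depth x); rewrite -ballE dx /= !inE ballE dx ltnn /=.
case/existsP => p /andP[]; rewrite ballE => dp px; exists p => //.
by have := depth_edge px; lia.
Qed.

Lemma depth_ltn_neq x y : depth x < depth y -> x != y.
Proof. by apply: contraTneq => ->; rewrite ltnn. Qed.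

Definition parent v := odflt r [pick p | e p v && (depth p == (depth v).-1)].

Lemma parent_spec v : v != r -> e (parent v) v /\ depth v = (depth (parent v)).+1.
Proof.
rewrite -depth_eq0 -lt0n => dv_gt0.
have [p pv dp] : exists2 p, e p v & depth p = (depth v).-1 by apply: depth_pred; lia.
rewrite /parent; case: pickP => [q /andP[qv /eqP dq] | /(_ p)] /=; first by split; lia.
by rewrite pv dp eqxx.
Qed.

Lemma parent_root : parent r = r.
Proof.
have dr : depth r = 0 by apply/eqP; rewrite depth_eq0.
rewrite /parent; case: pickP => [p /andP[_] | _] //=.
by rewrite dr /= depth_eq0 => /eqP.
Qed.

Lemma dist2_depth x y z : e x y -> e y z -> depth z = (depth x).+2 -> dist2 e x z.
Proof.
move=> xy yz dz; apply/and3P; split.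
- by apply: depth_ltn_neq; rewrite dz.
- by apply/negP => /depth_edge; lia.
- by apply/existsP; exists y; apply/andP.
Qed.

End Depth.

Arguments depth_ltn_neq [T e r] connect_root [x y].
Arguments dist2_depth [T e r] connect_root [x y z].

Section Graph.
Variables (T : finType) (e : rel T).
Hypothesis sym_e : symmetric e.

Lemma leaf_nbr v : v \in leaves e -> exists u, e v u.
Proof.
rewrite inE => /cards1P [u nbr]; exists u.
have : u \in [set w | e v w] by rewrite nbr set11.
by rewrite inE.
Qed.

Lemma leaf_nbr_uniq v u w : v \in leaves e -> e v u -> e v w -> w = u.
Proof.
rewrite inE => /cards1P [x nbr] vu vw.
have : u \in [set w | e v w] by rewrite inE.
have : w \in [set w | e v w] by rewrite inE.
by rewrite nbr !inE => /eqP -> /eqP ->.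
Qed.

Lemma support_of_leaf_nbr x y : e x y -> y \in leaves e -> x \in supports e.
Proof. by move=> xy yL; rewrite inE; apply/existsP; exists y; apply/andP. Qed.

Lemma leaf_support_nbr v : v \in leaves e -> exists2 u, e v u & u \in supports e.
Proof.
move=> vL; have [u vu] := leaf_nbr vL.
by exists u => //; apply: support_of_leaf_nbr vL; rewrite sym_e.
Qed.

Lemma deg_gt1 v a b : e v a -> e v b -> a != b -> 1 < deg e v.
Proof. by move=> va vb ab; apply/card_gt1P; exists a, b; rewrite !inE va vb. Qed.

Lemma dist2C : symmetric (dist2 e).
Proof.
move=> x y; rewrite /dist2 eq_sym sym_e; congr [&& _, _ & _].
by apply/existsP/existsP => -[z /andP[xz zy]]; exists z; rewrite sym_e zy sym_e xz.
Qed.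

Lemma gamma_d2_le (D : {set T}) : disj_dom e D -> gamma_d2 e <= #|D|.
Proof. exact: (Order.TotalTheory.bigmin_le_cond _ (fun D : {set T} => #|D|)). Qed.

Lemma gamma_d2_le_sum k (D : nat -> {set T}) :
  (forall i, i < k -> disj_dom e (D i)) -> k * gamma_d2 e <= \sum_(i < k) #|D i|.
Proof.
move=> Ddom; rewrite -[k in k * _]card_ord -sum_nat_const.
by apply: leq_sum => i _; apply/gamma_d2_le/Ddom.
Qed.

End Graph.

Lemma mod4_cases k i : i < 4 -> k.+2 %% 4 != i ->
  [|| k.+1 %% 4 == i, k.+3 %% 4 == i | (k %% 4 == i) && (k.+4 %% 4 == i)].
Proof. lia. Qed.

Lemma card_modn_classes (T : finType) (A : {set T}) (f : T -> nat) k : 0 < k ->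
  \sum_(i < k) #|[set x in A | f x %% k == i]| = #|A|.
Proof.
move=> k_gt0; pose cls x := Ordinal (ltn_pmod (f x) k_gt0).
rewrite -sum1_card (partition_big cls predT) //=.
by apply: eq_bigr => i _; rewrite sum1dep_card; apply: eq_card => x; rewrite !inE.
Qed.

Section RootedTree.
Variables (T : finType) (e : rel T) (r : T).
Hypotheses (sym_e : symmetric e) (irr_e : irreflexive e).
Hypotheses (connect_root : forall x, connect e r x) (n_edgesT : n_edges e = #|T| - 1).

Local Notation depth := (depth connect_root).
Local Notation parent := (parent connect_root).

Definition parent_arcs :=
  [set (x, parent x) | x in [set~ r]] :|: [set (parent x, x) | x in [set~ r]].

Lemma parent_arcsC a b : ((a, b) \in parent_arcs) = ((b, a) \in parent_arcs).
Proof.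
suff arcC a' b' : (a', b') \in parent_arcs -> (b', a') \in parent_arcs.
  by apply/idP/idP; apply: arcC.
by case/setUP => /imsetP [x xr [-> ->]]; apply/setUP; [right | left]; apply/imsetP; exists x.
Qed.

Lemma parent_arcs_edges : parent_arcs \subset [set p : T * T | e p.1 p.2].
Proof.
apply/subsetP => -[a b] /setUP [] /imsetP [x + [-> ->]];
  rewrite in_setC1 inE /= => /(parent_spec connect_root) [px _] //; by rewrite sym_e.
Qed.

Lemma card_parent_arcs : #|parent_arcs| = (#|T| - 1).*2.
Proof.
have card_arcs (f : T -> T * T) : injective f -> #|f @: [set~ r]| = #|T| - 1.
  by move=> f_inj; rewrite card_imset // cardsC1 subn1.
rewrite cardsU !card_arcs => [|x y [] | x y []] //.
suff -> : [set (x, parent x) | x in [set~ r]] :&: [set (parent x, x) | x in [set~ r]] = set0.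
  by rewrite cards0 subn0 addnn.
apply/setP => -[a b]; rewrite in_setI in_set0; apply/negP => /andP[].
case/imsetP => x; rewrite in_setC1 => xr [-> ->].
case/imsetP => y; rewrite in_setC1 => yr [xy px].
have [_ dx] := parent_spec connect_root xr; have [_ dy] := parent_spec connect_root yr.
by rewrite px in dx; rewrite -xy in dy; lia.
Qed.

(* The 2(n - 1) parent arcs already exhaust the arcs of a tree. *)
Lemma edge_parent v w : e v w -> w = parent v \/ v = parent w.
Proof.
move=> vw; case: (boolP ((v, w) \in parent_arcs)) => [|vw_new].
  by case/setUP => /imsetP [x _ [-> ->]]; [left | right].
exfalso; have wv_new : (w, v) \notin parent_arcs by rewrite parent_arcsC.
have vw_wv : (v, w) != (w, v) by apply: contraTneq vw => -[->]; rewrite irr_e.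
have arcs : parent_arcs :|: [set (v, w); (w, v)] \subset [set p : T * T | e p.1 p.2].
  rewrite subUset parent_arcs_edges; apply/subsetP => p /set2P [] ->; by rewrite inE //= sym_e.
have new_arcs : parent_arcs :&: [set (v, w); (w, v)] = set0.
  apply/setP => p; rewrite in_setI in_set0; apply/negP => /andP[p_old /set2P [] p_new].
  - by move: vw_new; rewrite -p_new p_old.
  - by move: wv_new; rewrite -p_new p_old.
have := subset_leq_card arcs; rewrite cardsU new_arcs cards2 vw_wv card_parent_arcs cards0 /=.
(* Generalizing identifies the differently elaborated copies of both cardinals. *)
move: n_edgesT; rewrite /n_edges; move: #|[set p : T * T | _]| #|T| => arcs_nb n; lia.
Qed.

Lemma depth_child v w : e v w -> w != parent v -> depth w = (depth v).+1.
Proof.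
move=> vw /negPf w_par; case: (edge_parent vw) => [/eqP | v_par]; first by rewrite w_par.
have wr : w != r.
  by apply: contraTneq vw => wr; rewrite v_par wr parent_root irr_e.
by have [_] := parent_spec connect_root wr; rewrite -v_par.
Qed.

Lemma exists_child v u : v \notin leaves e -> e v u -> exists2 c, e v c & depth c = (depth v).+1.
Proof.
move=> vL vu; have : 1 < deg e v.
  have : 0 < deg e v by apply/card_gt0P; exists u; rewrite inE.
  by move: vL; rewrite inE; lia.
case/card_gt1P => a [b []]; rewrite !inE => va vb ab.
have [ap | ap] := eqVneq a (parent v); last by exists a => //; apply: depth_child.
by exists b => //; apply: depth_child vb _; rewrite -ap eq_sym.
Qed.

Lemma exists_leaf : 1 < #|T| -> exists x, x \in leaves e.
Proof.
case/card_gt1P => y [z [_ _ yz]].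
pose x := [arg max_(x > r) depth x].
have x_max w : depth w <= depth x by rewrite /x; case: arg_maxnP => // x' _; apply.
have xr : x != r.
  have [w wr] : exists w, w != r.
    by have [yr | ] := eqVneq y r; [exists z; rewrite -yr eq_sym | exists y].
  by rewrite -(depth_eq0 connect_root) -lt0n; apply: leq_trans (x_max w); rewrite lt0n depth_eq0.
have [px _] := parent_spec connect_root xr.
exists x; rewrite inE; apply/cards1P; exists (parent x); apply/setP => w; rewrite !inE.
apply/idP/eqP => [xw | ->]; last by rewrite sym_e.
have [// | wNp] := eqVneq w (parent x).
by have := x_max w; rewrite (depth_child xw wNp) ltnn.
Qed.

Hypothesis root_leaf : r \in leaves e.

Definition layer_dom i :=
  supports e :|: [set x in ~: (leaves e :|: supports e) | depth x %% 4 == i].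

Lemma mem_layer_dom i x : x \notin leaves e -> depth x %% 4 == i -> x \in layer_dom i.
Proof.
move=> xL xi; apply/setUP; have [xS | xS] := boolP (x \in supports e); [by left | right].
by apply/setIdP; rewrite in_setC in_setU negb_or xL xS.
Qed.

Lemma parent_nonroot v : v \notin supports e -> v != r -> parent v != r.
Proof.
move=> vS vr; apply: contraNneq vS => pr.
have [pv _] := parent_spec connect_root vr.
by apply: (support_of_leaf_nbr _ root_leaf); rewrite sym_e -pr.
Qed.

Lemma nonsupport_neighbourhood v : v \notin leaves e -> v \notin supports e ->
  exists g p c gc,
  [/\ [/\ e g p, e p v, e v c & e c gc],
      [/\ depth p = (depth g).+1, depth v = (depth g).+2, depth c = (depth g).+3
         & depth gc = (depth g).+4]
    & (p \notin leaves e) && (c \notin leaves e)].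
Proof.
move=> vL vS; have vr : v != r by apply: contraNneq vL => ->.
have pr := parent_nonroot vS vr.
have [pv dv] := parent_spec connect_root vr; have [gp dp] := parent_spec connect_root pr.
set p := parent v in pr pv dv gp dp *; set g := parent p in gp dp *.
have vp : e v p by rewrite sym_e.
have [c vc dc] := exists_child vL vp.
have cL : c \notin leaves e by apply: contraNN vS; apply: support_of_leaf_nbr vc.
have [gc cgc dgc] : exists2 gc, e c gc & depth gc = (depth c).+1.
  by apply: (exists_child (u := v) cL); rewrite sym_e.
have pL : p \notin leaves e.
  rewrite inE gtn_eqF //; apply: (deg_gt1 (a := g) (b := v)) => //; first by rewrite sym_e.
  by apply: (depth_ltn_neq connect_root); rewrite dv dp.
by exists g, p, c, gc; split; rewrite ?pL ?cL //; split; rewrite ?dgc ?dc ?dv ?dp.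
Qed.

Lemma disj_dom_layer_dom i : i < 4 -> disj_dom e (layer_dom i).
Proof.
move=> i_lt4; apply/forallP => v; apply/implyP => vND.
have dom_by u : e v u -> u \in layer_dom i ->
    [exists u in layer_dom i, e v u] || (1 < #|[set u in layer_dom i | dist2 e v u]|).
  by move=> vu uD; apply/orP; left; apply/existsP; exists u; apply/andP.
have support_dom u : u \in supports e -> u \in layer_dom i by move=> uS; rewrite in_setU uS.
have vS : v \notin supports e by apply: contraNN vND; apply: support_dom.
have [vL | vL] := boolP (v \in leaves e).
  by have [u vu uS] := leaf_support_nbr sym_e vL; apply: dom_by vu (support_dom u uS).
have [g [p [c [gc [[gp pv vc cgc] [dp dv dc dgc] /andP[pL cL]]]]]] :=
  nonsupport_neighbourhood vL vS.
have ggc : g != gc by apply: (depth_ltn_neq connect_root); rewrite dgc -addn3 leq_addr.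
have vp : e v p by rewrite sym_e.
have : [|| depth p %% 4 == i, depth c %% 4 == i | (depth g %% 4 == i) && (depth gc %% 4 == i)].
  rewrite dp dc dgc; apply: mod4_cases => //; rewrite -dv.
  by apply: contraNN vND; apply: mem_layer_dom.
case/or3P => [pi | ci | /andP[gi gci]].
- exact: dom_by vp (mem_layer_dom pL pi).
- exact: dom_by vc (mem_layer_dom cL ci).
have [gL | gL] := boolP (g \in leaves e).
  have pg : e p g by rewrite sym_e.
  exact: dom_by vp (support_dom _ (support_of_leaf_nbr pg gL)).
have [gcL | gcL] := boolP (gc \in leaves e).
  exact: dom_by vc (support_dom _ (support_of_leaf_nbr cgc gcL)).
apply/orP; right; apply/card_gt1P; exists g, gc; split => //.
- apply/setIdP; split; first exact: mem_layer_dom.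
  by rewrite dist2C //; apply: (dist2_depth connect_root gp pv).
- apply/setIdP; split; first exact: mem_layer_dom.
  by apply: (dist2_depth connect_root vc cgc); rewrite dgc dv.
Qed.

Lemma leaf_root_bound : leaves e :&: supports e = set0 ->
  4 * gamma_d2 e + #|leaves e| <= #|T| + 3 * #|supports e|.
Proof.
move=> LS; have := gamma_d2_le_sum (k := 4) disj_dom_layer_dom.
set Y := fun i => [set x in ~: (leaves e :|: supports e) | depth x %% 4 == i].
have : \sum_(i < 4) #|layer_dom i| <= \sum_(i < 4) (#|supports e| + #|Y i|).
  by apply: leq_sum => i _; rewrite cardsU leq_subr.
rewrite big_split /= sum_nat_const card_ord card_modn_classes //.
rewrite -(cardsC (leaves e :|: supports e)) cardsU LS cards0 subn0.
lia.
Qed.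

End RootedTree.

Lemma leaf_support_bound (T : finType) (e : rel T) a :
  symmetric e -> irreflexive e -> (forall x y, connect e x y) ->
  a \in leaves e :&: supports e ->
  4 * gamma_d2 e + #|leaves e| <= #|T| + 3 * #|supports e|.
Proof.
move=> sym_e irr_e conn; rewrite in_setI => /andP[aL].
rewrite inE => /existsP [b /andP[ab bL]].
have ba : e b a by rewrite sym_e.
have ab_neq : a != b by apply: contraTneq ab => ->; rewrite irr_e.
have closed_ab : closed e [set a; b].
  apply: (intro_closed (sym_connect_sym sym_e)) => x y xy.
  by rewrite !inE => /orP[] /eqP xab; rewrite xab in xy;
    [rewrite (leaf_nbr_uniq aL ab xy) eqxx orbT | rewrite (leaf_nbr_uniq bL ba xy) eqxx].
have setT_ab : [set: T] = [set a; b].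
  by apply/setP => x; rewrite inE -(closed_connect closed_ab (conn a x)) set21.
have gamma_le1 : gamma_d2 e <= 1.
  rewrite -(cards1 b); apply: gamma_d2_le; apply/forallP => v; apply/implyP => vb.
  have /set2P [-> | vb'] : v \in [set a; b] by rewrite -setT_ab inE.
  - by apply/orP; left; apply/existsP; exists b; rewrite set11.
  - by rewrite vb' set11 in vb.
have supports_ab : [set a; b] \subset supports e.
  by apply/subsetP => x /set2P [] ->; rewrite inE; apply/existsP; [exists b | exists a]; apply/andP.
have := subset_leq_card supports_ab; have := subset_leq_card (subsetT (leaves e)).
by rewrite -cardsT setT_ab cards2 ab_neq /=; lia.
Qed.

Theorem corollary2p5 (T : finType) (e : rel T) :
  is_tree e -> 2 <= #|T| ->
  4 * gamma_d2 e + #|leaves e| <= #|T| + 3 * #|supports e|.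
Proof.
move=> [[sym_e irr_e] [conn n_edgesT]] n_gt1.
have /card_gt1P [x0 _] := n_gt1.
have [r rL] := exists_leaf sym_e irr_e (conn x0) n_edgesT n_gt1.
have [LS | [a aLS]] := set_0Vmem (leaves e :&: supports e).
- exact: leaf_root_bound sym_e irr_e (conn r) n_edgesT rL LS.
- exact: leaf_support_bound sym_e irr_e conn aLS.
Qed.
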